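(* Let $(D_n)_{n\in\mathbb Z}$ be the integer sequence with $D_0=1$, $D_1=D_2=0$ and $D_n+D_{n+1}=D_{n+3}$ for all $n\in\mathbb Z$ (so $D_{-1}=-1$). For integers $n,i,j$ let $$\Delta'_{n,n+i,n+i+j}=\det\begin{pmatrix}D_{n+2} & D_{n+4} & D_{n+3}\\ D_{n+i+2} & D_{n+i+4} & D_{n+i+3}\\ D_{n+i+j+2} & D_{n+i+j+4} & D_{n+i+j+3}\end{pmatrix}.$$ Then $\Delta'_{n,n+i,n+i+j}$ does not depend on $n$, and for all $n,i,j\in\mathbb Z$, $$\Delta'_{n,n+i,n+i+j}=D_{i+2}D_{i+j+4}-D_{i+j+2}D_{i+4}.$$ *)

From mathcomp Require Import all_boot all_order all_algebra.
Set Implicit Arguments. Unset Strict Implicit. Unset Printing Implicit Defensive.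
Import Order.TTheory GRing.Theory Num.Theory.
Local Open Scope ring_scope.

Definition is_D_seq (D : int -> int) : Prop :=
  [/\ D 0 = 1, D 1 = 0, D 2 = 0 & forall n : int, D n + D (n + 1) = D (n + 3)].

Definition Delta' (D : int -> int) (n i j : int) : int :=
  \det (\matrix_(r < 3, c < 3)
          D (n + nth 0 [:: 0; i; i + j] r + nth 0 [:: 2; 4; 3] c)).

(* Shifting n by one replaces each row (D_{m+2}, D_{m+4}, D_{m+3}) by
   (D_{m+3}, D_{m+5}, D_{m+4}) = (D_{m+3}, D_{m+2} + D_{m+3}, D_{m+4}), i.e. it
   multiplies the matrix on the right by a fixed integer matrix of determinant 1.
   Hence Delta' is independent of n, and at n = 0 the first row is
   (D_2, D_4, D_3) = (0, 0, 1), so the determinant reduces to a 2x2 minor. *)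
From mathcomp Require Import all_boot all_order all_algebra.
From mathcomp Require Import ring.
Import Order.TTheory GRing.Theory Num.Theory.
Local Open Scope ring_scope.

Lemma det_mx33 (R : comNzRingType) (A : 'M[R]_3) : \det A =
  A 0 0 * (A 1 1 * A 2 2 - A 1 2 * A 2 1) - A 0 1 * (A 1 0 * A 2 2 - A 1 2 * A 2 0)
  + A 0 2 * (A 1 0 * A 2 1 - A 1 1 * A 2 0).
Proof.
rewrite (expand_det_row _ 0) !big_ord_recl big_ord0 /cofactor.
rewrite !(expand_det_row _ 0) !big_ord_recl !big_ord0 /cofactor !det_mx11 /=.
rewrite !mxE /=.
set f := fun i j : nat => A (inord i) (inord j).
have A_inord x y : A x y = f (val x) (val y) by rewrite /f !inord_val.
rewrite !A_inord /= /bump /= !expr0 ?expr1 ?expr2; ring.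
Qed.

Lemma int_shift_invariant_const {T : Type} (f : int -> T) :
  (forall n, f (n + 1) = f n) -> forall n m, f n = f m.
Proof.
move=> f_shift.
suff f_eq0 n : f n = f 0 by move=> n m; rewrite (f_eq0 n) (f_eq0 m).
elim/int_rect: n => [//|k IH|k IH].
  by rewrite -addn1 PoszD f_shift.
by rewrite -IH -f_shift -addn1 PoszD opprD addrNK.
Qed.

Section DeltaShift.

Variable D : int -> int.
Hypothesis D_rec : forall n, D n + D (n + 1) = D (n + 3).

Definition Delta_mx (n i j : int) : 'M[int]_3 :=
  \matrix_(r < 3, c < 3) D (n + nth 0 [:: 0; i; i + j] r + nth 0 [:: 2; 4; 3] c).

Definition Delta_shift_mx : 'M[int]_3 :=
  \matrix_(r < 3, c < 3) nth 0 (nth [::] [:: [:: 0; 1; 0]; [:: 0; 0; 1]; [:: 1; 1; 0]] r) c.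

Lemma det_Delta_shift_mx : \det Delta_shift_mx = 1.
Proof. by rewrite det_mx33 !mxE. Qed.

Lemma Delta_mx_shift n i j :
  Delta_mx (n + 1) i j = Delta_mx n i j *m Delta_shift_mx.
Proof.
apply/matrixP=> r c; rewrite !mxE !big_ord_recr big_ord0 /= !mxE /=.
set m := nth 0 [:: 0; i; i + j] r.
have D_rec' : D (n + m + 2) + D (n + m + 3) = D (n + m + 5).
  have -> : n + m + 5 = n + m + 2 + 3 by ring.
  by rewrite -(D_rec (n + m + 2)); congr (_ + D _); ring.
case: c => [[|[|[|//]]] _] /=; rewrite !(mulr0, mulr1, add0r, addr0).
- by congr D; ring.
- by rewrite D_rec'; congr D; ring.
- by congr D; ring.
Qed.

Lemma Delta'_shift n i j : Delta' D (n + 1) i j = Delta' D n i j.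
Proof.
by rewrite /Delta' -/(Delta_mx _ _ _) Delta_mx_shift det_mulmx det_Delta_shift_mx mulr1.
Qed.

End DeltaShift.

Lemma Delta'0E (D : int -> int) i j :
  D 2 = 0 -> D 3 = 1 -> D 4 = 0 ->
  Delta' D 0 i j = D (i + 2) * D (i + j + 4) - D (i + j + 2) * D (i + 4).
Proof.
move=> D2 D3 D4; rewrite /Delta' det_mx33 !mxE /= !add0r D2 D3 D4; ring.
Qed.

Theorem theorem18 (D : int -> int) :
  is_D_seq D ->
  (forall n m i j : int, Delta' D n i j = Delta' D m i j) /\
  (forall n i j : int,
      Delta' D n i j = D (i + 2) * D (i + j + 4) - D (i + j + 2) * D (i + 4)).
Proof.
case=> D0 D1 D2 D_rec.
have Delta'_const n m i j : Delta' D n i j = Delta' D m i j.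
  by apply: (int_shift_invariant_const (fun k => Delta' D k i j)) => k; apply: Delta'_shift.
split=> // n i j.
have D3 : D 3 = 1 by rewrite -[3]add0r -D_rec D0 D1.
have D4 : D 4 = 0 by rewrite -[4]/(1 + 3) -D_rec D1 D2.
by rewrite (Delta'_const n 0) Delta'0E.
Qed.
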